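(* Let $n\geq 3$ and let $\mathcal H_n$ be the universal homogeneous $K_n$-free graph. Then $\mathcal H_n$ is IY-homogeneous for every $\mathrm{Y}\in\{\mathrm{H},\mathrm{I},\mathrm{A},\mathrm{E},\mathrm{B},\mathrm{M}\}$, and $\mathcal H_n$ is not XY-homogeneous for any $\mathrm{X}\in\{\mathrm{H},\mathrm{M}\}$ and any $\mathrm{Y}\in\{\mathrm{H},\mathrm{I},\mathrm{A},\mathrm{E},\mathrm{B},\mathrm{M}\}$.
   Context: All graphs are undirected and loopless; subgraphs are induced. $\mathcal H_n$ is the Fraïssé limit of the class of finite $K_n$-free graphs; it is the unique countable graph such that for all finite disjoint $A,B\subseteq\mathcal H_n$ with $A$ $K_{n-1}$-free there is a vertex adjacent to every vertex of $A$ and to no vertex of $B$. For $\mathrm{X}\in\{\mathrm{H},\mathrm{M},\mathrm{I}\}$ an X-morphism is a homomorphism, monomorphism (injective homomorphism), or isomorphism onto its image. For $\mathrm{Y}\in\{\mathrm{H},\mathrm{I},\mathrm{A},\mathrm{E},\mathrm{B},\mathrm{M}\}$, a Y-morphism $G\to G$ is, respectively, an endomorphism, a self-embedding, an automorphism, a surjective endomorphism, a bijective endomorphism, or an injective endomorphism. $G$ is XY-homogeneous if every X-morphism between finite induced subgraphs of $G$ is the restriction of a Y-morphism $G\to G$. *)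

From Stdlib Require Import List Arith.
Import ListNotations.

Record graph (V : Type) := {
  adj : V -> V -> Prop;
  adj_sym : forall x y, adj x y -> adj y x;
  adj_irrefl : forall x, ~ adj x x }.
Arguments adj {V} g _ _.

Section Graphs.
Context {V : Type} (G : graph V).

Definition clique (L : list V) : Prop :=
  NoDup L /\ forall x y, In x L -> In y L -> x <> y -> adj G x y.

Definition Kfree_on (m : nat) (A : list V) : Prop :=
  ~ exists L, clique L /\ length L = m /\ forall x, In x L -> In x A.

Definition Kfree (m : nat) : Prop :=
  ~ exists L, clique L /\ length L = m.

Definition countable_type : Prop :=
  exists f : V -> nat, forall x y, f x = f y -> x = y.

Definition henson_extension (n : nat) : Prop :=
  forall A B : list V,
    (forall x, In x A -> ~ In x B) ->
    Kfree_on (n - 1) A ->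
    exists v, ~ In v B /\
      (forall a, In a A -> adj G v a) /\ (forall b, In b B -> ~ adj G v b).

(* G is (isomorphic to) the universal homogeneous K_n-free graph H_n *)
Definition is_henson (n : nat) : Prop :=
  countable_type /\ Kfree n /\ henson_extension n.

Definition hom_on (A : list V) (f : V -> V) : Prop :=
  forall x y, In x A -> In y A -> adj G x y -> adj G (f x) (f y).
Definition inj_on (A : list V) (f : V -> V) : Prop :=
  forall x y, In x A -> In y A -> f x = f y -> x = y.
Definition emb_on (A : list V) (f : V -> V) : Prop :=
  inj_on A f /\
  forall x y, In x A -> In y A -> (adj G x y <-> adj G (f x) (f y)).

Inductive Xkind := XH | XM | XI.
Inductive Ykind := YH | YI | YA | YE | YB | YM.

Definition Xmorphism (X : Xkind) (A : list V) (f : V -> V) : Prop :=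
  match X with
  | XH => hom_on A f
  | XM => hom_on A f /\ inj_on A f
  | XI => emb_on A f
  end.

Definition endo (g : V -> V) : Prop := forall x y, adj G x y -> adj G (g x) (g y).
Definition injective (g : V -> V) : Prop := forall x y, g x = g y -> x = y.
Definition surjective (g : V -> V) : Prop := forall y, exists x, g x = y.
Definition self_embedding (g : V -> V) : Prop :=
  injective g /\ forall x y, adj G x y <-> adj G (g x) (g y).

Definition Ymorphism (Y : Ykind) (g : V -> V) : Prop :=
  match Y with
  | YH => endo g
  | YI => self_embedding g
  | YA => self_embedding g /\ surjective g
  | YE => endo g /\ surjective g
  | YB => endo g /\ injective g /\ surjective g
  | YM => endo g /\ injective g
  end.

(* XY-homogeneity: every X-morphism between finite induced subgraphs
   (given as f restricted to a finite vertex list A) extends to a Y-morphism *)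
Definition XY_homogeneous (X : Xkind) (Y : Ykind) : Prop :=
  forall (A : list V) (f : V -> V), Xmorphism X A f ->
    exists g : V -> V, Ymorphism Y g /\ forall x, In x A -> g x = f x.

End Graphs.

(* Homogeneity is a back-and-forth argument. A finite partial isomorphism P can
   be extended to any new vertex z: the extension property supplies an image w
   adjacent exactly to the P-images of the neighbours of z, which is possible
   because those images span a K_(n-1)-free set (a K_(n-1) there would pull back
   through P to a K_n through z). Enumerating the countable vertex set and
   alternating forth and back steps, the union of the resulting chain is an
   automorphism, and an automorphism is a Y-morphism for every Y.

   For the negative part, any two nonadjacent vertices a, b have n-2 pairwise
   adjacent common neighbours, so an endomorphism making a and b adjacent would
   create a K_n. Mapping a to itself and b to a neighbour of a is nevertheless a
   monomorphism of the induced subgraph on {a, b}. *)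

From Stdlib Require Import List Arith Lia Classical ClassicalEpsilon.
Import ListNotations.

Section Cliques.
Context {V : Type} (G : graph V).

Lemma clique_nil : clique G [].
Proof. split; [constructor | intros x y []]. Qed.

Lemma clique_cons x L :
  clique G L -> (forall y, In y L -> adj G x y) -> clique G (x :: L).
Proof.
  intros [Hnd Hadj] Hx. split.
  - constructor; auto. intro Hin. exact (adj_irrefl _ G x (Hx x Hin)).
  - intros u w [<-|Hu] [<-|Hw] Hne; auto.
    + congruence.
    + apply adj_sym; auto.
Qed.

Lemma clique_inv x L :
  clique G (x :: L) -> clique G L /\ forall y, In y L -> adj G x y.
Proof.
  intros [Hnd Hadj]. inversion Hnd as [|? ? Hx Hnd']; subst. split.
  - split; auto. intros; apply Hadj; simpl; auto.
  - intros y Hy. apply Hadj; simpl; auto. intros ->; contradiction.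
Qed.

Lemma clique_map (h : V -> V) L : clique G L -> hom_on G L h -> clique G (map h L).
Proof.
  induction L as [|x L IH]; intros HL Hh; simpl; [exact clique_nil|].
  destruct (clique_inv x L HL) as [HL' Hx]. apply clique_cons.
  - apply IH; auto. intros u w Hu Hw; apply Hh; simpl; auto.
  - intros y Hy. apply in_map_iff in Hy as [u [<- Hu]]. apply Hh; simpl; auto.
Qed.

Lemma clique_length_le L A : clique G L -> incl L A -> length L <= length A.
Proof. intros [Hnd _]. exact (NoDup_incl_length Hnd). Qed.

Lemma Kfree_on_short m A : length A < m -> Kfree_on G m A.
Proof.
  intros Hlt [L [HL [Hlen Hin]]]. pose proof (clique_length_le L A HL Hin). lia.
Qed.

Lemma Kfree_pos m : Kfree G m -> 0 < m.
Proof.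
  intro HK. destruct m; [|lia]. exfalso. apply HK.
  exists []. split; [exact clique_nil | reflexivity].
Qed.

End Cliques.

Section Morphisms.
Context {V : Type} (G : graph V).

Lemma Ymorphism_endo Y g : Ymorphism G Y g -> endo G g.
Proof.
  destruct Y; simpl; intro Hg; try apply Hg.
  - intros x y; apply (proj2 Hg).
  - intros x y; apply (proj2 (proj1 Hg)).
Qed.

Lemma automorphism_Ymorphism Y g :
  self_embedding G g -> surjective g -> Ymorphism G Y g.
Proof.
  intros [Hinj Hadj] Hsurj.
  assert (He : endo G g) by (intros x y; apply Hadj).
  destruct Y; simpl; repeat split; auto; apply Hadj.
Qed.

End Morphisms.

Section PartialIsomorphisms.
Context {V : Type} (G : graph V).

Definition partial_iso (P : list (V * V)) : Prop :=
  forall x y x' y', In (x, y) P -> In (x', y') P ->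
    (x = x' <-> y = y') /\ (adj G x x' <-> adj G y y').

Definition graph_on (A : list V) (f : V -> V) : list (V * V) :=
  map (fun a => (a, f a)) A.

Lemma in_graph_on A f x y : In (x, y) (graph_on A f) <-> In x A /\ y = f x.
Proof.
  unfold graph_on; rewrite in_map_iff; split.
  - intros [a [E Ha]]; inversion E; subst; auto.
  - intros [Hx ->]; exists x; auto.
Qed.

Lemma partial_iso_graph_on A f : emb_on G A f -> partial_iso (graph_on A f).
Proof.
  intros [Hinj Hadj] x y x' y' H H'.
  apply in_graph_on in H as [Hx ->], H' as [Hx' ->]. split.
  - split; [intros ->; reflexivity | apply Hinj; auto].
  - apply Hadj; auto.
Qed.

Definition swap_pairs (P : list (V * V)) : list (V * V) :=
  map (fun p => (snd p, fst p)) P.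

Lemma in_swap_pairs P x y : In (x, y) (swap_pairs P) <-> In (y, x) P.
Proof.
  unfold swap_pairs; rewrite in_map_iff; split.
  - intros [[a b] [E H]]; inversion E; subst; auto.
  - intro H; exists (y, x); auto.
Qed.

Lemma partial_iso_swap P : partial_iso P -> partial_iso (swap_pairs P).
Proof.
  intros HP x y x' y' H H'. rewrite in_swap_pairs in H, H'.
  destruct (HP _ _ _ _ H H'). split; symmetry; auto.
Qed.

Lemma partial_iso_cons P z w : partial_iso P ->
  (forall x y, In (x, y) P -> (z = x <-> w = y) /\ (adj G z x <-> adj G w y)) ->
  partial_iso ((z, w) :: P).
Proof.
  intros HP Hzw x y x' y' [E|H] [E'|H'].
  - inversion E; inversion E'; subst. split; [tauto|].
    split; intro h; exfalso; eapply adj_irrefl; eauto.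
  - inversion E; subst. auto.
  - inversion E'; subst. destruct (Hzw _ _ H) as [Heq Hadj]. split.
    + split; intro; symmetry; apply Heq; auto.
    + split; intro h; apply adj_sym, Hadj, adj_sym, h.
  - auto.
Qed.

Definition images (P : list (V * V)) (S : V -> Prop) : list V :=
  map snd (filter (fun p => if excluded_middle_informative (S (fst p))
                            then true else false) P).

Lemma in_images P S y : In y (images P S) <-> exists x, In (x, y) P /\ S x.
Proof.
  unfold images; rewrite in_map_iff; split.
  - intros [[x y'] [E Hf]]; simpl in E; subst. apply filter_In in Hf as [Hxy HS].
    simpl in HS. destruct (excluded_middle_informative (S x)); [eauto | discriminate].
  - intros [x [Hxy HS]]. exists (x, y). split; auto. apply filter_In; split; auto.
    simpl. destruct (excluded_middle_informative (S x)); tauto.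
Qed.

Section ChainUnion.
Variable Q : nat -> list (V * V).
Hypothesis Q_iso : forall m, partial_iso (Q m).
Hypothesis Q_mono : forall m k, m <= k -> incl (Q m) (Q k).
Hypothesis Q_dom : forall z, exists m w, In (z, w) (Q m).
Hypothesis Q_ran : forall z, exists m x, In (x, z) (Q m).

Definition chain_union (z : V) : V :=
  epsilon (inhabits z) (fun w => exists m, In (z, w) (Q m)).

Lemma chain_common m m' p p' :
  In p (Q m) -> In p' (Q m') -> exists k, In p (Q k) /\ In p' (Q k).
Proof.
  intros H H'. exists (m + m'). split.
  - apply (Q_mono m); [lia | exact H].
  - apply (Q_mono m'); [lia | exact H'].
Qed.

Lemma chain_union_in z : exists m, In (z, chain_union z) (Q m).
Proof.
  unfold chain_union. apply epsilon_spec.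
  destruct (Q_dom z) as [m [w H]]. eauto.
Qed.

Lemma chain_union_agrees m z w : In (z, w) (Q m) -> chain_union z = w.
Proof.
  intro H. destruct (chain_union_in z) as [m' H'].
  destruct (chain_common _ _ _ _ H' H) as [k [H1 H2]].
  apply (Q_iso k _ _ _ _ H1 H2); reflexivity.
Qed.

Lemma chain_union_automorphism :
  self_embedding G chain_union /\ surjective chain_union.
Proof.
  assert (Hpair : forall x y, exists k,
    In (x, chain_union x) (Q k) /\ In (y, chain_union y) (Q k)).
  { intros x y. destruct (chain_union_in x) as [m Hx], (chain_union_in y) as [m' Hy].
    exact (chain_common _ _ _ _ Hx Hy). }
  split; [split|].
  - intros x y E. destruct (Hpair x y) as [k [Hx Hy]].
    apply (Q_iso k _ _ _ _ Hx Hy); exact E.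
  - intros x y. destruct (Hpair x y) as [k [Hx Hy]].
    apply (Q_iso k _ _ _ _ Hx Hy).
  - intro y. destruct (Q_ran y) as [m [x Hx]].
    exists x. exact (chain_union_agrees m x y Hx).
Qed.

End ChainUnion.
End PartialIsomorphisms.

Section Henson.
Context {V : Type} (G : graph V).
Variable n : nat.
Hypothesis HK : Kfree G n.
Hypothesis HE : henson_extension G n.

Lemma images_nbhd_Kfree P z :
  partial_iso G P -> Kfree_on G (n - 1) (images P (adj G z)).
Proof.
  intros HP [L [HL [Hlen Hin]]].
  set (pre := fun y => epsilon (inhabits y) (fun x => In (x, y) P /\ adj G z x)).
  assert (Hpre : forall y, In y L -> In (pre y, y) P /\ adj G z (pre y)).
  { intros y Hy. apply epsilon_spec, in_images, Hin, Hy. }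
  apply HK. exists (z :: map pre L). split.
  - apply clique_cons.
    + apply clique_map; auto. intros y y' Hy Hy'.
      apply (HP _ _ _ _ (proj1 (Hpre y Hy)) (proj1 (Hpre y' Hy'))).
    + intros x Hx. apply in_map_iff in Hx as [y [<- Hy]]. apply Hpre, Hy.
  - simpl. rewrite length_map. pose proof (Kfree_pos G n HK). lia.
Qed.

Lemma partial_iso_forth P z : partial_iso G P ->
  exists P', partial_iso G P' /\ incl P P' /\ exists w, In (z, w) P'.
Proof.
  intro HP.
  destruct (classic (exists w, In (z, w) P)) as [Hz|Hz].
  { exists P. split; [|split]; auto using incl_refl. }
  destruct (HE (images P (adj G z)) (images P (fun x => ~ adj G z x)))
    as [w [HwB [HwA HwN]]].
  - intros y HA HB.
    apply in_images in HA as [x [Hx Hzx]], HB as [x' [Hx' Hzx']].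
    destruct (HP _ _ _ _ Hx Hx') as [[_ E] _]. rewrite E in Hzx; auto.
  - apply images_nbhd_Kfree, HP.
  - exists ((z, w) :: P). split; [|split].
    + apply partial_iso_cons; auto. intros x y Hxy.
      assert (Hzx : z <> x) by (intros ->; eauto).
      destruct (classic (adj G z x)) as [h|h].
      * assert (Hwy : adj G w y) by (apply HwA, in_images; eauto).
        split; [split; intro E; [contradiction|] | tauto].
        subst; exfalso; eapply adj_irrefl; eauto.
      * assert (HyB : In y (images P (fun x => ~ adj G z x)))
          by (apply in_images; eauto).
        split; [split; intro E; [contradiction | subst; contradiction] |].
        split; intro h'; [contradiction | exfalso; exact (HwN y HyB h')].
    + apply incl_tl, incl_refl.
    + exists w; simpl; auto.
Qed.

Lemma partial_iso_back P z : partial_iso G P ->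
  exists P', partial_iso G P' /\ incl P P' /\ exists x, In (x, z) P'.
Proof.
  intro HP.
  destruct (partial_iso_forth (swap_pairs P) z (partial_iso_swap G P HP))
    as [Q [HQ [Hi [w Hw]]]].
  exists (swap_pairs Q). split; [apply partial_iso_swap, HQ | split].
  - intros [a b] Hab. apply in_swap_pairs, Hi, in_swap_pairs, Hab.
  - exists w; apply in_swap_pairs, Hw.
Qed.

Section Enumeration.
Variable code : V -> nat.
Hypothesis code_inj : forall x y, code x = code y -> x = y.

Definition covers_code (m : nat) (P : list (V * V)) : Prop :=
  forall z, code z = m -> (exists w, In (z, w) P) /\ (exists x, In (x, z) P).

Lemma partial_iso_cover P m : partial_iso G P ->
  exists P', partial_iso G P' /\ incl P P' /\ covers_code m P'.
Proof.
  intro HP. destruct (classic (exists z, code z = m)) as [[z Hz]|Hnone].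
  - destruct (partial_iso_forth P z HP) as [P1 [H1 [I1 [w Hw]]]].
    destruct (partial_iso_back P1 z H1) as [P2 [H2 [I2 [x Hx]]]].
    exists P2. split; [|split]; auto.
    + eapply incl_tran; eauto.
    + intros z' Hz'. rewrite <- Hz in Hz'. apply code_inj in Hz'. subst. eauto.
  - exists P. split; [|split]; auto using incl_refl.
    intros z Hz; exfalso; eauto.
Qed.

Definition cover_step (P : list (V * V)) (m : nat) : list (V * V) :=
  epsilon (inhabits P)
    (fun P' => partial_iso G P -> partial_iso G P' /\ incl P P' /\ covers_code m P').

Lemma cover_step_spec P m : partial_iso G P ->
  partial_iso G (cover_step P m) /\ incl P (cover_step P m) /\
  covers_code m (cover_step P m).
Proof.
  intro HP. generalize HP. unfold cover_step. apply epsilon_spec.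
  destruct (partial_iso_cover P m HP) as [P' H]. eauto.
Qed.

Fixpoint cover_chain (P0 : list (V * V)) (m : nat) : list (V * V) :=
  match m with
  | 0 => P0
  | S m => cover_step (cover_chain P0 m) m
  end.

Lemma cover_chain_iso P0 m : partial_iso G P0 -> partial_iso G (cover_chain P0 m).
Proof. intro HP0. induction m; simpl; [exact HP0 | apply cover_step_spec, IHm]. Qed.

Lemma cover_chain_mono P0 m k : partial_iso G P0 -> m <= k ->
  incl (cover_chain P0 m) (cover_chain P0 k).
Proof.
  intros HP0. induction 1; [apply incl_refl|].
  eapply incl_tran; [eassumption|]. apply cover_step_spec, cover_chain_iso, HP0.
Qed.

Lemma cover_chain_covers P0 z : partial_iso G P0 ->
  covers_code (code z) (cover_chain P0 (S (code z))).
Proof. intro HP0. apply cover_step_spec, cover_chain_iso, HP0. Qed.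

Lemma partial_iso_extends_to_automorphism P : partial_iso G P ->
  exists g, self_embedding G g /\ surjective g /\ forall x y, In (x, y) P -> g x = y.
Proof.
  intro HP.
  set (Q := cover_chain P).
  assert (HQ : forall m, partial_iso G (Q m)) by (intro; apply cover_chain_iso, HP).
  assert (Hmono : forall m k, m <= k -> incl (Q m) (Q k))
    by (intros; apply cover_chain_mono; auto).
  assert (Hdom : forall z, exists m w, In (z, w) (Q m)).
  { intro z. exists (S (code z)). apply (cover_chain_covers P z HP); reflexivity. }
  assert (Hran : forall z, exists m x, In (x, z) (Q m)).
  { intro z. exists (S (code z)). apply (cover_chain_covers P z HP); reflexivity. }
  destruct (chain_union_automorphism G Q HQ Hmono Hdom Hran) as [Hemb Hsurj].
  exists (chain_union Q). split; [|split]; auto.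
  intros x y Hxy. apply (chain_union_agrees G Q HQ Hmono Hdom 0), Hxy.
Qed.

End Enumeration.

Lemma common_nbhd_clique a b : ~ adj G a b -> forall k, k <= n - 2 ->
  exists C, clique G C /\ length C = k /\ forall c, In c C -> adj G a c /\ adj G b c.
Proof.
  intros Hab. induction k as [|k IH]; intro Hk.
  - exists []. split; [apply clique_nil|]. split; [reflexivity | intros c []].
  - destruct IH as [C [HC [Hlen HCab]]]; [lia|].
    destruct (HE (a :: b :: C) []) as [v [_ [Hv _]]].
    + intros x _ [].
    + intros [L [HL [HLlen Hin]]].
      (* a K_(n-1) cannot contain both a and b, and a :: C, b :: C are too short *)
      assert (Hsub : incl L (a :: C) \/ incl L (b :: C)).
      { destruct (classic (In a L)) as [HaL|HaL]; [left|right];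
          intros x Hx; destruct (Hin x Hx) as [<-|[<-|Hc]]; simpl; auto.
        - destruct (classic (b = a)) as [->|Hne]; auto.
          exfalso. apply Hab, (proj2 HL); auto.
        - contradiction. }
      destruct Hsub as [Hs|Hs]; apply (clique_length_le G) in Hs; auto;
        simpl in Hs; lia.
    + exists (v :: C). split; [|split].
      * apply clique_cons; auto. intros y Hy; apply Hv; simpl; auto.
      * simpl; lia.
      * intros c [<-|Hc]; auto. split; apply adj_sym, Hv; simpl; auto.
Qed.

Lemma endo_nonadjacent (Hn : 2 <= n) g a b :
  endo G g -> ~ adj G a b -> ~ adj G (g a) (g b).
Proof.
  intros Hg Hab Hgab.
  destruct (common_nbhd_clique a b Hab (n - 2) (le_n _)) as [C [HC [Hlen HCab]]].
  apply HK. exists (g a :: g b :: map g C). split.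
  - apply clique_cons; [apply clique_cons|].
    + apply clique_map; auto. intros x y _ _; apply Hg.
    + intros y Hy. apply in_map_iff in Hy as [c [<- Hc]]. apply Hg, HCab, Hc.
    + intros y [<-|Hy]; auto.
      apply in_map_iff in Hy as [c [<- Hc]]. apply Hg, HCab, Hc.
  - simpl. rewrite length_map. lia.
Qed.

Lemma exists_nonadjacent_pair (Hn : 2 <= n) : exists a b, a <> b /\ ~ adj G a b.
Proof.
  destruct (HE [] []) as [a _]; [intros x [] | apply Kfree_on_short; simpl; lia|].
  destruct (HE [] [a]) as [b [Hb [_ Hba]]];
    [intros x [] | apply Kfree_on_short; simpl; lia|].
  exists a, b. split.
  - intros ->; apply Hb; simpl; auto.
  - intro h. apply (Hba a); simpl; auto. apply adj_sym, h.
Qed.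

Lemma exists_neighbour (Hn : 3 <= n) a : exists y, adj G a y.
Proof.
  destruct (HE [a] []) as [y [_ [Hy _]]];
    [intros x _ [] | apply Kfree_on_short; simpl; lia|].
  exists y. apply adj_sym, Hy; simpl; auto.
Qed.

Lemma not_XY_homogeneous (Hn : 3 <= n) X Y :
  X = XH \/ X = XM -> ~ XY_homogeneous G X Y.
Proof.
  intros HX Hhom.
  destruct (exists_nonadjacent_pair ltac:(lia)) as [a [b [Hne Hab]]].
  destruct (exists_neighbour Hn a) as [y Hay].
  set (f := fun x => if excluded_middle_informative (x = a) then a else y).
  assert (Hfa : f a = a)
    by (unfold f; destruct (excluded_middle_informative (a = a)); congruence).
  assert (Hfb : f b = y)
    by (unfold f; destruct (excluded_middle_informative (b = a)); congruence).
  assert (Hedgeless : forall u w, In u [a; b] -> In w [a; b] -> ~ adj G u w).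
  { intros u w [<-|[<-|[]]] [<-|[<-|[]]] h; try exact (adj_irrefl _ G _ h).
    - contradiction.
    - apply Hab, adj_sym, h. }
  assert (Hinj : inj_on [a; b] f).
  { intros u w [<-|[<-|[]]] [<-|[<-|[]]] E; auto;
      rewrite ?Hfa, ?Hfb in E; exfalso.
    - rewrite <- E in Hay. exact (adj_irrefl _ G _ Hay).
    - rewrite E in Hay. exact (adj_irrefl _ G _ Hay). }
  destruct (Hhom [a; b] f) as [g [Hg Hgf]].
  { assert (Hhom_on : hom_on G [a; b] f)
      by (intros u w Hu Hw h; exfalso; exact (Hedgeless u w Hu Hw h)).
    destruct HX as [-> | ->]; simpl; auto. }
  apply (endo_nonadjacent ltac:(lia) g a b (Ymorphism_endo G Y g Hg) Hab).
  rewrite (Hgf a), (Hgf b), Hfa, Hfb by (simpl; auto). exact Hay.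
Qed.

End Henson.

Theorem mainTheorem9 (n : nat) (V : Type) (G : graph V) :
  3 <= n -> is_henson G n ->
  (forall Y : Ykind, XY_homogeneous G XI Y) /\
  (forall X : Xkind, (X = XH \/ X = XM) ->
     forall Y : Ykind, ~ XY_homogeneous G X Y).
Proof.
  intros Hn [[code code_inj] [HK HE]]. split.
  - intros Y A f Hf.
    destruct (partial_iso_extends_to_automorphism G n HK HE code code_inj
                (graph_on A f) (partial_iso_graph_on G A f Hf))
      as [g [Hemb [Hsurj Hext]]].
    exists g. split; [apply automorphism_Ymorphism; auto|].
    intros x Hx. apply Hext, in_graph_on; auto.
  - intros X HX Y. exact (not_XY_homogeneous G n HK HE Hn X Y HX).
Qed.
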